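(* Suppose $p_j=1$ for all $j\in[n]$. Then for any constant $\epsilon\in(0,1)$ and any $\alpha\in(0,1)$, IPR with $\rho=2$ is a $(1+\epsilon)(1+\alpha)$-consistent and $(2+1/\alpha)$-robust partitioning algorithm.
   Context: Scheduling with Speed Predictions (SSP). An instance consists of $n$ jobs with processing times $p_1,\dots,p_n\ge 0$ and $m$ machines with true speeds $s_1,\dots,s_m>0$; processing job $j$ on machine $i$ takes time $p_j/s_i$. For a bag (set of jobs) $B$, $p(B)=\sum_{j\in B}p_j$. In the partitioning stage the algorithm receives $\mathbf p$ and predicted speeds $\hat{\mathbf s}\ge0$ (not $\mathbf s$) and partitions $[n]$ into $m$ possibly empty bags. In the scheduling stage $\mathbf s$ is revealed and each bag is assigned whole to a machine; the makespan is $\max_i(\text{total processing time on } i)/s_i$. $opt(\mathbf p,\mathbf s)$ is the minimum makespan of assigning individual jobs knowing $\mathbf s$. A partitioning algorithm is $c$-consistent (resp. $\beta$-robust) if the two-stage algorithm that runs it and then assigns the bags to machines with minimum possible makespan has makespan at most $c\cdot opt(\mathbf p,\mathbf s)$ whenever $\hat{\mathbf s}=\mathbf s$ (resp. at most $\beta\cdot opt(\mathbf p,\mathbf s)$ for all $\mathbf p,\hat{\mathbf s},\mathbf s$). Algorithm IPR. Input: predicted speeds $\hat s_1\ge\dots\ge\hat s_m$, $\mathbf p$, $\alpha$, accuracy $\epsilon\in(0,1)$, $\rho\ge1$. (1) Compute a partition $B_1,\dots,B_m$ with $p(B_1)\ge\dots\ge p(B_m)$ such that putting $B_i$ on machine $i$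 has makespan at most $(1+\epsilon)opt(\mathbf p,\hat{\mathbf s})$ under speeds $\hat{\mathbf s}$. (2) Set $\overline{OPT}_C=\max_i p(B_i)/\hat s_i$ and $\mathcal M_i=\{B_i\}$. (3) While $\max\{p(B): B\in\cup_i\mathcal M_i, |B|\ge2\}>\rho\min\{p(B):B\in\cup_i\mathcal M_i\}$: compute $\mathcal M'=$ LPT-Rebalance$(\mathcal M)$; if $\max_i\sum_{B\in\mathcal M'_i}p(B)/\hat s_i>(1+\alpha)\overline{OPT}_C$ return the current bags $\cup_i\mathcal M_i$; else $\mathcal M\leftarrow\mathcal M'$. (4) Return the bags $\cup_i\mathcal M_i$. LPT-Rebalance: let $B_{\min}$ be a bag of minimum $p(B)$ over all bags, $\mathcal M_{\min}$ its collection, and $\mathcal M_{\max}$ a collection containing a bag of maximum $p(B)$ among bags with at least two jobs. Move $B_{\min}$ into $\mathcal M_{\max}$; let $\ell=|\mathcal M_{\max}|$; pool the jobs of $\mathcal M_{\max}$ and redistribute them into $\ell$ new bags by LPT (jobs in non-increasing processing time, each into a currently least-loaded bag); these form the new $\mathcal M_{\max}$. *)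

(* with extended reals from mathcomp-analysis (constructive_ereal)
   so that loads on machines of predicted speed 0 get time +oo. *)
From HB Require Import structures.
From mathcomp Require Import all_boot all_order all_algebra all_fingroup.
From mathcomp Require Import reals constructive_ereal.
Set Implicit Arguments. Unset Strict Implicit. Unset Printing Implicit Defensive.
Import Order.TTheory GRing.Theory Num.Theory.
Local Open Scope ring_scope.

Section SSP.
Variable R : realType.
Variables n m : nat.
(* jobs are 'I_n, machines are 'I_m; a partition into m (possibly empty) bags
   is a labelling  a : 'I_n -> 'I_m  (job j lies in bag  a j). *)

Definition ptime (L s : R) : \bar R :=
  if 0 < s then (L / s)%:E else if L == 0 then 0%E else +oo%E.

Definition makespan (f : 'I_n -> 'I_m) (p : 'I_n -> R) (s : 'I_m -> R) : \bar R :=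
  \big[Order.max/0%E]_(i < m) ptime (\sum_(j < n | f j == i) p j) (s i).

Definition opt (p : 'I_n -> R) (s : 'I_m -> R) : \bar R :=
  \big[Order.min/+oo%E]_(f : {ffun 'I_n -> 'I_m}) makespan f p s.

Definition bag_makespan (a : 'I_n -> 'I_m) (p : 'I_n -> R) (s : 'I_m -> R) : \bar R :=
  \big[Order.min/+oo%E]_(g : {ffun 'I_m -> 'I_m}) makespan (fun j => g (a j)) p s.

Definition pB (p : 'I_n -> R) (a : 'I_n -> 'I_m) (k : 'I_m) : R :=
  \sum_(j < n | a j == k) p j.
Definition bsize (a : 'I_n -> 'I_m) (k : 'I_m) : nat := #|[set j | a j == k]|.

Definition ipr_step1 (p : 'I_n -> R) (shat : 'I_m -> R) (eps : R)
    (a : 'I_n -> 'I_m) : Prop :=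
  (exists sigma : {perm 'I_m}, forall i k : 'I_m, (i <= k)%N ->
      shat (sigma k) <= shat (sigma i) /\ pB p a (sigma k) <= pB p a (sigma i))
  /\ (makespan a p shat <= (1 + eps)%:E * opt p shat)%E.

Definition ipr_cond (p : 'I_n -> R) (rho : R) (a : 'I_n -> 'I_m) : Prop :=
  exists k, (2 <= bsize a k)%N /\ exists k', rho * pB p a k' < pB p a k.

(* a' restricted to the job set J is an LPT distribution of J into the bags
   labelled by K: jobs are processed in a non-increasing order of processing
   time (ties arbitrary), each going to a currently least-loaded bag of K
   (ties arbitrary), starting from empty bags. *)
Definition lpt_assign (p : 'I_n -> R) (J : {set 'I_n}) (K : {set 'I_m})
    (a' : 'I_n -> 'I_m) : Prop :=
  exists js : seq 'I_n,
    [/\ uniq js, (forall j, (j \in js) = (j \in J)),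
        sorted (fun x y => p y <= p x) js &
        forall js1 j js2, js = js1 ++ j :: js2 ->
          a' j \in K /\
          forall k, k \in K ->
            \sum_(x <- js1 | a' x == a' j) p x <= \sum_(x <- js1 | a' x == k) p x].

(* LPT-Rebalance.  State: a (job -> bag) and own (bag -> machine collection). *)
Definition lpt_rebalance (p : 'I_n -> R) (a : 'I_n -> 'I_m) (own : 'I_m -> 'I_m)
    (a' : 'I_n -> 'I_m) (own' : 'I_m -> 'I_m) : Prop :=
  exists kmin kmax : 'I_m,
    [/\ (forall k, pB p a kmin <= pB p a k),
        (2 <= bsize a kmax)%N,
        (forall k, (2 <= bsize a k)%N -> pB p a k <= pB p a kmax),
        own' = (fun k => if k == kmin then own kmax else own k) &
        let K := [set k | own' k == own kmax] in
        let J := [set j | a j \in K] in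
        lpt_assign p J K a' /\ (forall j, j \notin J -> a' j = a j)].

(* Step (3), the while loop; optc is OPT_C; the last index is the output. *)
Inductive ipr_loop (p : 'I_n -> R) (shat : 'I_m -> R) (alpha rho : R)
    (optc : \bar R) : ('I_n -> 'I_m) -> ('I_m -> 'I_m) -> ('I_n -> 'I_m) -> Prop :=
| ipr_stop_cond a own :
    ~ ipr_cond p rho a -> ipr_loop p shat alpha rho optc a own a
| ipr_stop_exceed a own a' own' :
    ipr_cond p rho a -> lpt_rebalance p a own a' own' ->
    ((1 + alpha)%:E * optc < makespan (fun j => own' (a' j)) p shat)%E ->
    ipr_loop p shat alpha rho optc a own a
| ipr_continue a own a' own' out :
    ipr_cond p rho a -> lpt_rebalance p a own a' own' ->
    ~ ((1 + alpha)%:E * optc < makespan (fun j => own' (a' j)) p shat)%E ->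
    ipr_loop p shat alpha rho optc a' own' out ->
    ipr_loop p shat alpha rho optc a own out.

(* out is a possible output (bag partition) of IPR(shat, p, alpha, eps, rho).
   OPT_C = max_i p(B_i)/shat_i is exactly makespan a0 p shat. *)
Definition IPR (p : 'I_n -> R) (shat : 'I_m -> R) (alpha eps rho : R)
    (out : 'I_n -> 'I_m) : Prop :=
  exists a0, ipr_step1 p shat eps a0 /\
    ipr_loop p shat alpha rho (makespan a0 p shat) a0 (fun k => k) out.

End SSP.

From HB Require Import structures.
From mathcomp Require Import all_boot all_order all_algebra all_fingroup.
From mathcomp Require Import reals constructive_ereal.
From mathcomp Require Import ring lra zify.
Set Implicit Arguments. Unset Strict Implicit. Unset Printing Implicit Defensive.
Import Order.TTheory GRing.Theory Num.Theory.
Local Open Scope ring_scope.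

(* With unit jobs only bag sizes matter. Along the loop of IPR three facts persist:
   every machine stays within (1 + alpha) OPT_C under the predicted speeds; the
   bags of one collection differ in size by at most one, as LPT spreads unit jobs
   evenly; and machine i carries at most OPT_C * shat_i plus one minimum bag per
   merged bag, the minimum bag size never decreasing.  If the loop stops because
   its condition fails, the bags are singletons or within a factor 2 in size.  If
   a rebalance would overload a machine, that machine is the one receiving the
   minimum bag, and the last two facts bound the largest bag by (2 + 1/alpha)
   times the smallest.  Consistency is then the first fact together with
   OPT_C <= (1 + eps) OPT.  For robustness, singleton bags are scheduled
   optimally, and bags within a factor C >= 2 of each other can be placed
   greedily, heaviest first, into C times the capacities of any schedule. *)

Section RatioBoundedAssignment.
Variables (R : realFieldType) (T : finType) (w c : T -> R) (C : R).
Hypotheses (C_ge2 : 2 <= C) (w_ge0 : forall k, 0 <= w k) (c_ge0 : forall i, 0 <= c i).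
Hypothesis w_ratio : forall k k', w k <= C * w k'.
Hypothesis sum_w_le : \sum_k w k <= \sum_i c i.

Lemma greedy_fit (A : {set T}) (g : T -> T) k :
  k \notin A -> (forall k', k' \in A -> w k <= w k') ->
  exists i, \sum_(k' in A | g k' == i) w k' + w k <= C * c i.
Proof.
move=> kNA k_light; have C_ge0 : 0 <= C by have := C_ge2; lra.
apply/existsP; apply/contraT; rewrite negb_exists => /forallP none.
set SA := \sum_(k' in A) w k'.
(* If k fits nowhere, the overflows add up to more than C times the total weight. *)
have cover : SA + \sum_(k' : T) w k <= C * \sum_k' w k'.
  rewrite /SA big_mkcond /= -big_split mulr_sumr /=; apply: ler_sum => k' _.
  case: ifPn => [k'A | _]; last by rewrite add0r w_ratio.
  by have := ler_wpM2r (w_ge0 k') C_ge2; have := k_light _ k'A; lra.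
have overflow : C * \sum_i c i < SA + \sum_(i : T) w k.
  have -> : SA = \sum_i \sum_(k' in A | g k' == i) w k'.
    by rewrite /SA (partition_big g xpredT).
  rewrite -big_split mulr_sumr /=; apply: ltr_sum => [|i _]; last by rewrite ltNge none.
  by apply/hasP; exists k; rewrite ?mem_index_enum.
have := ler_wpM2l C_ge0 sum_w_le.
by clearbody SA; lra.
Qed.

Lemma ratio_bounded_assignment :
  exists g : T -> T, forall i, \sum_(k | g k == i) w k <= C * c i.
Proof.
suff [A [g [cardA _ fits]]] : exists (A : {set T}) (g : T -> T),
    [/\ #|A| = #|T|, forall k k', k \in A -> k' \notin A -> w k' <= w k
      & forall i, \sum_(k in A | g k == i) w k <= C * c i].
  have AT : A = [set: T] by apply/eqP; rewrite eqEcard subsetT cardsT cardA leqnn.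
  by exists g => i; move: (fits i); rewrite AT; under eq_bigl do rewrite in_setT.
elim: {-2}#|T| (leqnn #|T|) => [_|t IH lt_t].
  exists set0, id; split => [|k k'|i]; rewrite ?cards0 ?in_set0 //.
  by rewrite big_pred0 => [|k]; rewrite ?in_set0 ?mulr_ge0 //; have := C_ge2; lra.
have [A [g [cardA heavyA fits]]] := IH (ltnW lt_t).
have [k0] : exists k0, k0 \in ~: A.
  by apply/card_gt0P; rewrite cardsCs setCK cardA subn_gt0.
rewrite in_setC => k0NA.
have [k /= kNA k_max] := @arg_maxP _ _ _ k0 [pred x | x \notin A] w k0NA.
have [i0 fit0] := @greedy_fit A g k kNA (fun k' k'A => heavyA _ _ k'A kNA).
exists (k |: A), (fun k' => if k' == k then i0 else g k'); split.
- by rewrite cardsU1 kNA cardA.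
- move=> k1 k2; rewrite !in_setU1 negb_or => /predU1P[->|k1A] /andP[k2k k2A].
    exact: k_max.
  exact: heavyA.
- move=> i; rewrite big_mkcondr big_setU1 //= eqxx.
  rewrite (eq_bigr (fun k' => if g k' == i then w k' else 0)); last first.
    by move=> k' k'A; have /negbTE-> : k' != k by apply: contraNneq kNA => <-.
  by rewrite -big_mkcondr; case: eqVneq => [<-|_]; [rewrite addrC | rewrite add0r fits].
Qed.

End RatioBoundedAssignment.

(* X stands for OPT_C * shat_i, L and N for the load and the number of bags of the
   overloaded machine i, b for the size of the bag moved onto it and W for its
   largest bag. *)
Lemma overload_ratio (R : realFieldType) (alpha X L b N W : R) :
  0 < alpha -> 1 <= N -> 1 <= b -> (1 + alpha) * X < L + b ->
  L <= X + (N - 1) * b -> N * W <= L + N -> alpha * W <= (2 * alpha + 1) * b.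
Proof.
move=> alpha_gt0 N_ge1 b_ge1 over cap fill.
have load_small : alpha * L < b + (1 + alpha) * (N - 1) * b.
  have : (1 + alpha) * (L - (N - 1) * b) <= (1 + alpha) * X.
    by rewrite ler_pM2l; lra.
  lra.
have : N * (alpha * W) < N * (alpha + (1 + alpha) * b).
  have : alpha * (N * W) <= alpha * (L + N) by rewrite ler_pM2l.
  have : 0 <= alpha * b by rewrite mulr_ge0 //; lra.
  lra.
rewrite ltr_pM2l; last lra.
have : alpha <= alpha * b by rewrite ler_peMr //; lra.
lra.
Qed.

Section ProcessingTime.
Variable R : realType.
Implicit Types L s x : R.

Lemma ptime_le L1 L2 s : 0 <= L1 -> L1 <= L2 -> (ptime L1 s <= ptime L2 s)%E.
Proof.
move=> L1_ge0 L12; rewrite /ptime; case: ifPn => [s_gt0|_].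
  by rewrite lee_fin ler_pM2r ?invr_gt0.
case: eqVneq => [_|L1_neq0]; first by case: ifPn => // _; apply: leey.
by rewrite gt_eqF // (lt_le_trans _ L12) // lt_def L1_neq0.
Qed.

Lemma ptime_pos L s : 0 < s -> ptime L s = (L / s)%:E.
Proof. by rewrite /ptime => ->. Qed.

Lemma lee_ptime_pos L s x : 0 < s -> (ptime L s <= x%:E)%E = (L <= x * s).
Proof. by move=> s_gt0; rewrite ptime_pos // lee_fin ler_pdivrMr. Qed.

Lemma lte_ptime_pos L s x : 0 < s -> (x%:E < ptime L s)%E = (x * s < L).
Proof. by move=> s_gt0; rewrite ptime_pos // lte_fin ltr_pdivlMr. Qed.

Lemma ptime_fin_eq0 L s x : ~~ (0 < s) -> (ptime L s <= x%:E)%E -> L = 0.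
Proof. by rewrite /ptime => /negbTE->; case: eqP => // _; rewrite leye_eq. Qed.

End ProcessingTime.

Section Bags.
Variables n m : nat.
Implicit Types (a f : 'I_n -> 'I_m) (own : 'I_m -> 'I_m).

Definition nbags own (i : 'I_m) : nat := #|[set k | own k == i]|.

Definition move_bag own (k0 i0 : 'I_m) : 'I_m -> 'I_m :=
  fun k => if k == k0 then i0 else own k.

Lemma sum_bsize f : (\sum_i bsize f i)%N = n.
Proof.
rewrite -[n in RHS]card_ord -sum1_card (partition_big f xpredT) //=.
by apply: eq_bigr => i _; rewrite /bsize -sum1_card; apply: eq_bigl => j; rewrite inE.
Qed.

Lemma bsize_comp a own i : bsize (own \o a) i = (\sum_(k | own k == i) bsize a k)%N.
Proof.
rewrite /bsize -sum1_card (partition_big a (fun k => own k == i)) => [|j]; last by rewrite inE.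
apply: eq_bigr => k /eqP own_k; rewrite -sum1_card; apply: eq_bigl => j; rewrite !inE.
by apply/andb_idl => /eqP aj_k; rewrite /= aj_k own_k.
Qed.

Lemma bsize_le_comp a own k : (bsize a k <= bsize (own \o a) (own k))%N.
Proof. by rewrite bsize_comp (bigD1 k) //= leq_addr. Qed.

Lemma nbags_gt0 own k : (0 < nbags own (own k))%N.
Proof. by apply/card_gt0P; exists k; rewrite inE. Qed.

Lemma nbags_mul_le a own i w : (forall k, own k = i -> w <= (bsize a k).+1)%N ->
  (nbags own i * w <= bsize (own \o a) i + nbags own i)%N.
Proof.
move=> w_le; rewrite /nbags -[X in (_ <= _ + X)%N]muln1 -!sum_nat_cond_const bsize_comp -big_split.
by apply: leq_sum => k /eqP /w_le; rewrite /= addn1.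
Qed.

Lemma sum_move_bag own k0 i0 (F : 'I_m -> nat) i :
  (\sum_(k | move_bag own k0 i0 k == i) F k + (own k0 == i) * F k0
   = \sum_(k | own k == i) F k + (i0 == i) * F k0)%N.
Proof.
rewrite !(big_mkcond (fun k => _ == i)) (bigD1 k0) //.
rewrite [X in _ = X + _](bigD1 k0) //=.
rewrite /move_bag eqxx.
rewrite (eq_bigr (fun k => if own k == i then F k else 0%N)) => [|k /negbTE->] //.
by case: (i0 == i); case: (own k0 == i); rewrite ?mul1n ?mul0n; lia.
Qed.

Lemma bsize_move_bag a own k0 i0 i :
  (bsize (move_bag own k0 i0 \o a) i + (own k0 == i) * bsize a k0
   = bsize (own \o a) i + (i0 == i) * bsize a k0)%N.
Proof. by rewrite !bsize_comp sum_move_bag. Qed.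

Lemma nbags_move_bag own k0 i0 i :
  (nbags (move_bag own k0 i0) i + (own k0 == i) = nbags own i + (i0 == i))%N.
Proof.
have := sum_move_bag own k0 i0 (fun=> 1%N) i.
by rewrite /nbags !sum_nat_cond_const !muln1.
Qed.

(* Moving bag k0 leaves  load - nbags * |k0|  unchanged on every machine; stated
   additively to avoid truncated subtraction. *)
Lemma move_bag_exchange a own k0 i0 i :
  (bsize (move_bag own k0 i0 \o a) i + nbags own i * bsize a k0
   = bsize (own \o a) i + nbags (move_bag own k0 i0) i * bsize a k0)%N.
Proof.
have := bsize_move_bag a own k0 i0 i; have := nbags_move_bag own k0 i0 i.
move=> /(congr1 (muln^~ (bsize a k0))); rewrite !mulnDl; lia.
Qed.

Lemma nbags_move_bag_eq0 own k0 k1 i :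
  nbags own i = 0%N -> nbags (move_bag own k0 (own k1)) i = 0%N.
Proof.
move=> /eqP; rewrite cards_eq0 => /eqP/setP empty.
have own_neq k : (own k == i) = false by have := empty k; rewrite !inE.
by apply/eqP; rewrite cards_eq0; apply/eqP/setP => k; rewrite !inE /move_bag; case: ifP.
Qed.

End Bags.

Lemma bag_makespan_le (R : realType) n m (p : 'I_n -> R) (a : 'I_n -> 'I_m)
    (g : 'I_m -> 'I_m) s :
  (bag_makespan a p s <= makespan (g \o a) p s)%E.
Proof.
apply: le_trans (bigmin_le _ [ffun k => g k] _) _; rewrite le_eqVlt; apply/orP; left.
by apply/eqP/eq_bigr => i _; congr ptime; apply: eq_bigl => j; rewrite ffunE.
Qed.

Section UnitJobs.
Variables (R : realType) (n m : nat) (p : 'I_n -> R).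
Hypothesis p1 : forall j, p j = 1.

Lemma sum_unit (P : pred 'I_n) : \sum_(j | P j) p j = #|[set j | P j]|%:R.
Proof.
rewrite (eq_bigr (fun=> 1)) // -sum1_card natr_sum.
by apply: eq_bigl => j; rewrite inE.
Qed.

Lemma pB_unit (a : 'I_n -> 'I_m) k : pB p a k = (bsize a k)%:R.
Proof. exact: sum_unit. Qed.

Lemma makespan_unit (f : 'I_n -> 'I_m) s :
  makespan f p s = \big[Order.max/0%E]_i ptime (bsize f i)%:R (s i).
Proof. by apply: eq_bigr => i _; rewrite sum_unit. Qed.

Lemma makespan_ge0 (f : 'I_n -> 'I_m) s : (0 <= makespan f p s)%E.
Proof. by rewrite makespan_unit; apply: bigmax_ge_id. Qed.

Lemma opt_ge0 (s : 'I_m -> R) : (0 <= opt p s)%E.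
Proof. by apply: le_bigmin => [|f _]; [apply: leey | apply: makespan_ge0]. Qed.

Lemma makespan_fin (f : 'I_n -> 'I_m) s :
  (forall i, 0 < s i) -> exists x, makespan f p s = x%:E.
Proof.
move=> s_gt0; rewrite makespan_unit.
elim/big_ind: _ => [|_ _ [x ->] [y ->]|i _]; first by exists 0.
  by rewrite maxEle; case: ifP; eexists.
by rewrite ptime_pos //; eexists.
Qed.

End UnitJobs.

Section LPT.
Variables (R : realType) (n m : nat) (p : 'I_n -> R).
Variables (J : {set 'I_n}) (K : {set 'I_m}) (a' : 'I_n -> 'I_m).
Hypothesis lpt : lpt_assign p J K a'.

Lemma lpt_assign_in j : j \in J -> a' j \in K.
Proof.
case: lpt => js [_ js_J _ lpt_step] jJ; have j_js : j \in js by rewrite js_J.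
have [] // := lpt_step (take (index j js) js) j (drop (index j js).+1 js).
by rewrite -{2}(nth_index j j_js) -drop_nth ?index_mem ?cat_take_drop.
Qed.

Hypothesis p1 : forall j, p j = 1.
Hypothesis outside : forall j, j \notin J -> a' j \notin K.

(* Each unit job joins a least loaded bag of K, so the prefix loads of K stay
   within 1 of each other. *)
Lemma lpt_assign_balanced k1 k2 :
  k1 \in K -> k2 \in K -> (bsize a' k1 <= (bsize a' k2).+1)%N.
Proof.
case: lpt => js [js_uniq js_J _ lpt_step] k1K k2K.
pose cnt t k := \sum_(x <- take t js | a' x == k) p x.
have cnt_bal t : cnt t k1 <= cnt t k2 + 1.
  elim: t => [|t IH]; first by rewrite /cnt take0 !big_nil; lra.
  have [lt_t|le_t] := ltnP t (size js); last first.
    by rewrite /cnt !take_oversize ?(leq_trans le_t) in IH *.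
  have x0 : 'I_n by case: (js) lt_t => [|x _] //; exact: x.
  have js_split : js = take t js ++ nth x0 js t :: drop t.+1 js.
    by rewrite -drop_nth // cat_take_drop.
  have [jK j_least] := lpt_step _ _ _ js_split.
  have := j_least k2 k2K; rewrite /cnt (take_nth x0 lt_t) !big_rcons /= p1 in IH *.
  by case: eqVneq => [->|_]; case: eqVneq => _; lra.
have cnt_bsize k : k \in K -> cnt (size js) k = (bsize a' k)%:R.
  move=> kK; rewrite /cnt take_size -(pB_unit p1) /pB.
  rewrite (perm_big (enum J)) ?big_enum_cond; last first.
    by apply: uniq_perm; rewrite ?enum_uniq // => x; rewrite mem_enum js_J.
  apply: eq_bigl => x; case: (boolP (x \in J)) => //= xNJ.
  by apply/esym/negbTE; apply: contra (outside xNJ) => /eqP->.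
by have := cnt_bal (size js); rewrite !cnt_bsize // natr1 ler_nat.
Qed.

End LPT.

Section Rebalance.
Variables (R : realType) (n m : nat) (p : 'I_n -> R).
Hypothesis p1 : forall j, p j = 1.
Variables (a a' : 'I_n -> 'I_m) (own own' : 'I_m -> 'I_m).

Lemma lpt_rebalanceP : lpt_rebalance p a own a' own' ->
  exists kmin kmax : 'I_m,
  [/\ forall k, (bsize a kmin <= bsize a k)%N,
      (2 <= bsize a kmax)%N,
      forall k, (2 <= bsize a k)%N -> (bsize a k <= bsize a kmax)%N,
      own' = move_bag own kmin (own kmax) &
      [/\ forall i, bsize (own' \o a') i = bsize (own' \o a) i,
          forall k, own' k != own kmax -> bsize a' k = bsize a k &
          forall k1 k2, own' k1 = own kmax -> own' k2 = own kmax ->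
            (bsize a' k1 <= (bsize a' k2).+1)%N]].
Proof.
case=> kmin [kmax [min_kmin two_kmax max_kmax own'E]] /=.
set K := [set k | own' k == own kmax]; set J := [set j | a j \in K] => -[lpt unchanged].
have outside j : j \notin J -> a' j \notin K.
  by move=> jNJ; rewrite unchanged //; rewrite /J inE in jNJ.
have on_kmax j : j \in J -> own' (a j) = own kmax /\ own' (a' j) = own kmax.
  by move=> jJ; move: jJ (lpt_assign_in lpt jJ); rewrite /J /K !inE => /eqP-> /eqP->.
exists kmin, kmax; split=> //.
- by move=> k; rewrite -(ler_nat R) -!(pB_unit p1).
- by move=> k /max_kmax; rewrite !(pB_unit p1) ler_nat.
split.
- move=> i; apply: eq_card => j; rewrite !inE /=.
  by have [/on_kmax[-> ->]|/unchanged->] := boolP (j \in J).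
- move=> k kNK; apply: eq_card => j; rewrite !inE.
  have neq_k x : own' x = own kmax -> (x == k) = false.
    by move=> xK; apply: contraNF kNK => /eqP<-; apply/eqP.
  by have [/on_kmax[ajK a'jK]|/unchanged->//] := boolP (j \in J); rewrite !neq_k.
- move=> k1 k2 k1K k2K.
  by apply: (lpt_assign_balanced lpt p1 outside); rewrite /K inE; apply/eqP.
Qed.

Lemma lpt_rebalance_min_le k0 k : lpt_rebalance p a own a' own' ->
  (forall k, bsize a k0 <= bsize a k)%N -> (bsize a k0 <= bsize a' k)%N.
Proof.
move=> /lpt_rebalanceP[kmin [kmax [_ _ _ _ [load_eq unchanged bal]]]] min_k0.
have [kK|/unchanged->//] := eqVneq (own' k) (own kmax).
rewrite leqNgt; apply/negP => small.
(* otherwise the bags of k's collection would have lost jobs in total *)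
have := load_eq (own kmax); rewrite !bsize_comp (bigD1 k) ?kK //=.
rewrite [X in _ = X](bigD1 k) ?kK //=.
set S' := (X in (bsize a' k + X)%N); set S := (X in _ = (bsize a k + X)%N).
have : (S' <= S)%N.
  apply: leq_sum => k' /andP[/eqP k'K _].
  by have := bal k' k k'K kK; have := min_k0 k'; lia.
by clearbody S S'; have := min_k0 k; lia.
Qed.

End Rebalance.

Section BalancedBags.
Variables (R : realType) (n m : nat).
Implicit Types (C : R) (a : 'I_n -> 'I_m).

Definition bags_balanced C a : Prop :=
  (forall k, bsize a k <= 1)%N \/ (forall k k', (bsize a k)%:R <= C * (bsize a k')%:R).

Lemma bag_ratio_of_large C a : 1 <= C -> (forall k, 0 < bsize a k)%N ->
  (forall k k', (2 <= bsize a k)%N -> (bsize a k)%:R <= C * (bsize a k')%:R) ->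
  forall k k', (bsize a k)%:R <= C * (bsize a k')%:R.
Proof.
move=> C_ge1 nonempty large k k'; have [/large//|small] := leqP 2 (bsize a k).
have : (bsize a k)%:R <= 1 :> R by rewrite lern1 -ltnS.
have : 1 <= (bsize a k')%:R :> R by rewrite ler1n.
nra.
Qed.

End BalancedBags.

Section IPRLoop.
Variables (R : realType) (n m : nat) (p : 'I_n -> R).
Hypothesis p1 : forall j, p j = 1.
Variables (shat : 'I_m -> R) (alpha : R).
Hypotheses (shat_ge0 : forall i, 0 <= shat i) (alpha_gt0 : 0 < alpha).
Implicit Types (a : 'I_n -> 'I_m) (own : 'I_m -> 'I_m).

Lemma ipr_stop_balanced a : ~ ipr_cond p 2 a -> bags_balanced (2 + alpha^-1) a.
Proof.
move=> no_cond.
have [/existsP[kb kb_large]|/existsPn small] := boolP [exists k, 1 < bsize a k]%N; last first.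
  by left => k; rewrite leqNgt small.
have le2 k k' : (2 <= bsize a k)%N -> (bsize a k)%:R <= 2 * (bsize a k')%:R :> R.
  move=> k_large; rewrite leNgt; apply/negP => over; apply: no_cond.
  by exists k; split=> //; exists k'; rewrite !(pB_unit p1).
have C_ge2 : 2 <= 2 + alpha^-1 by rewrite lerDl invr_ge0 ltW.
right; apply: bag_ratio_of_large => [|k|k k' /le2 k_le]; first lra.
  have := le2 _ k kb_large; have : 2%:R <= (bsize a kb)%:R :> R by rewrite ler_nat.
  by rewrite -(ltr_nat R); lra.
by apply: le_trans (k_le k') (ler_wpM2r _ C_ge2).
Qed.

Lemma ipr_loop_output_infty a own out :
  ipr_loop p shat alpha 2 +oo%E a own out -> bags_balanced (2 + alpha^-1) out.
Proof.
elim=> [a' own' /ipr_stop_balanced //|a' own' ? ? _ _ over|//].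
by move: over; rewrite muleC gt0_mulye ?lte_fin ?ltNge ?leey //; have := alpha_gt0; lra.
Qed.

Variable cr : R.
Hypothesis cr_ge0 : 0 <= cr.

Record ipr_invariant a own : Prop := {
  inv_load : forall i, (ptime (bsize (own \o a) i)%:R (shat i) <= ((1 + alpha) * cr)%:E)%E;
  inv_balanced : forall k k', own k = own k' -> (bsize a k <= (bsize a k').+1)%N;
  inv_capacity : forall k0, (forall k, bsize a k0 <= bsize a k)%N ->
    forall i, (0 < nbags own i)%N ->
    (bsize (own \o a) i)%:R <= cr * shat i + ((nbags own i)%:R - 1) * (bsize a k0)%:R }.

Lemma ipr_invariant_init a0 : makespan a0 p shat = cr%:E -> ipr_invariant a0 (fun k => k).
Proof.
move=> opt_a0.
have load_le i : (ptime (bsize a0 i)%:R (shat i) <= cr%:E)%E.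
  by rewrite -opt_a0 (makespan_unit p1) (le_bigmax 0%E (fun i => ptime _ (shat i))).
split=> [i|k k' ->|k0 _ i _]; [|exact: leqnSn|].
- by apply: le_trans (load_le i) _; rewrite lee_fin ler_peMl //; have := alpha_gt0; lra.
- have -> : nbags (fun k => k) i = 1%N.
    by rewrite /nbags -(cards1 i); apply: eq_card => k; rewrite !inE.
  rewrite subrr mul0r addr0; have [s_gt0|s_le0] := boolP (0 < shat i).
    by rewrite -lee_ptime_pos.
  by rewrite (ptime_fin_eq0 s_le0 (load_le i)) mulr_ge0.
Qed.

Lemma ipr_invariant_makespan a own : ipr_invariant a own ->
  (makespan (own \o a) p shat <= ((1 + alpha) * cr)%:E)%E.
Proof.
move=> inv; rewrite (makespan_unit p1); apply: bigmax_le => [|i _]; last exact: inv_load.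
by rewrite lee_fin mulr_ge0 //; have := alpha_gt0; lra.
Qed.

Lemma ipr_invariant_step a own a' own' :
  ipr_invariant a own -> lpt_rebalance p a own a' own' ->
  ~ ((1 + alpha)%:E * cr%:E < makespan (own' \o a') p shat)%E ->
  ipr_invariant a' own'.
Proof.
move=> [load_ok bal cap] rebal /negP; rewrite -leNgt -EFinM (makespan_unit p1).
move=> /bigmax_leP[_ load_ok'].
have [kmin [kmax [min_kmin _ _ own'E [load_eq unchanged bal_K]]]] := lpt_rebalanceP p1 rebal.
split=> [i|k k' same|k0 min_k0 i nb'_gt0]; first exact: load_ok'.
- have [kK|kNK] := eqVneq (own' k) (own kmax); first by apply: bal_K; rewrite -?same.
  have k'NK : own' k' != own kmax by rewrite -same.
  rewrite !unchanged //; apply: bal; move: same kNK k'NK; rewrite own'E /move_bag.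
  by case: eqP => _; case: eqP => _; rewrite ?eqxx.
- have min_le := lpt_rebalance_min_le p1 k0 rebal min_kmin.
  have nb_gt0 : (0 < nbags own i)%N.
    by rewrite lt0n; apply: contraTneq nb'_gt0 => nb0; rewrite own'E nbags_move_bag_eq0.
  have := move_bag_exchange a own kmin (own kmax) i; rewrite -own'E -load_eq.
  move=> /(congr1 (fun x => x%:R : R)); rewrite !natrD !natrM.
  have := cap _ min_kmin i nb_gt0.
  have : (bsize a kmin)%:R <= (bsize a' k0)%:R :> R by rewrite ler_nat.
  have : 1 <= (nbags own' i)%:R :> R by rewrite ler1n.
  nra.
Qed.

Lemma ipr_overload_receiver a own kmin kmax :
  ipr_invariant a own -> (0 < bsize a kmax)%N ->
  (((1 + alpha) * cr)%:E < makespan (move_bag own kmin (own kmax) \o a) p shat)%E ->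
  [/\ (0 < bsize a kmin)%N, 0 < shat (own kmax) &
      (1 + alpha) * cr * shat (own kmax) < (bsize (own \o a) (own kmax) + bsize a kmin)%:R].
Proof.
move=> [load_ok _ _] kmax_gt0 over.
have [i over_i] : exists i, (((1 + alpha) * cr)%:E
    < ptime (bsize (move_bag own kmin (own kmax) \o a) i)%:R (shat i))%E.
  apply/existsP; move: over; apply: contraLR; rewrite negb_exists => /forallP fit.
  rewrite -leNgt (makespan_unit p1); apply: bigmax_le => [|i _]; last by rewrite leNgt fit.
  by rewrite lee_fin mulr_ge0 //; have := alpha_gt0; lra.
have grew : (bsize (own \o a) i < bsize (move_bag own kmin (own kmax) \o a) i)%N.
  rewrite ltnNge; apply/negP => shrunk; move: over_i; apply/negP; rewrite -leNgt.
  by apply: le_trans (load_ok i); apply: ptime_le; rewrite ?ler_nat.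
have moved := bsize_move_bag a own kmin (own kmax) i.
(* only the receiving machine can have grown, and only if the moved bag is nonempty *)
have [i_kmax kmin_gt0] : own kmax = i /\ (0 < bsize a kmin)%N.
  case: (eqVneq (own kmax) i) moved grew => [->|_]; rewrite ?mul1n ?mul0n; last lia.
  by split=> //; lia.
subst i; have s_gt0 : 0 < shat (own kmax).
  apply/contraT => s_le0; have /eqP := ptime_fin_eq0 s_le0 (load_ok (own kmax)).
  by rewrite pnatr_eq0; have := bsize_le_comp a own kmax; lia.
split=> //; move: over_i; rewrite lte_ptime_pos // -mulrA => /lt_le_trans; apply.
by rewrite ler_nat; move: moved; rewrite eqxx mul1n; lia.
Qed.

Lemma ipr_exceed_balanced a own a' own' :
  ipr_invariant a own -> lpt_rebalance p a own a' own' ->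
  ((1 + alpha)%:E * cr%:E < makespan (own' \o a') p shat)%E ->
  bags_balanced (2 + alpha^-1) a.
Proof.
move=> inv rebal.
have [kmin [kmax [min_kmin large_kmax max_kmax own'E [load_eq _ _]]]] := lpt_rebalanceP p1 rebal.
have -> : makespan (own' \o a') p shat = makespan (own' \o a) p shat.
  by rewrite !(makespan_unit p1); apply: eq_bigr => i _; rewrite load_eq.
rewrite -EFinM own'E => /(ipr_overload_receiver inv (ltnW large_kmax)).
move=> [kmin_gt0 s_gt0 over].
have fill : (nbags own (own kmax) * bsize a kmax
             <= bsize (own \o a) (own kmax) + nbags own (own kmax))%N.
  by apply: nbags_mul_le => k /esym same; apply: (inv_balanced inv).
have C_ge2 : 2 <= 2 + alpha^-1 by rewrite lerDl invr_ge0 ltW.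
have kmax_le : (bsize a kmax)%:R <= (2 + alpha^-1) * (bsize a kmin)%:R :> R.
  have -> : (2 + alpha^-1) * (bsize a kmin)%:R
            = alpha^-1 * ((2 * alpha + 1) * (bsize a kmin)%:R) by field; rewrite gt_eqF.
  rewrite ler_pdivlMl //; apply: (overload_ratio alpha_gt0 _ _ _
    (inv_capacity inv min_kmin (nbags_gt0 own kmax))).
  - by rewrite ler1n nbags_gt0.
  - by rewrite ler1n.
  - by rewrite mulrA -natrD.
  - by rewrite -natrM -natrD ler_nat.
right; apply: bag_ratio_of_large => [|k|k k' large_k]; first lra.
  exact: leq_trans kmin_gt0 (min_kmin k).
apply: le_trans (_ : _ <= (bsize a kmax)%:R) _; first by rewrite ler_nat max_kmax.
by apply: le_trans kmax_le _; rewrite ler_wpM2l ?ler_nat //; lra.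
Qed.

Lemma ipr_loop_output a own out :
  ipr_loop p shat alpha 2 cr%:E a own out -> ipr_invariant a own ->
  (exists own2, (makespan (own2 \o out) p shat <= ((1 + alpha) * cr)%:E)%E)
  /\ bags_balanced (2 + alpha^-1) out.
Proof.
elim=> {a own out} [a own no_cond|a own a' own' _ rebal over|
                    a own a' own' out _ rebal fit _ IH] inv.
- by split; [exists own; apply: ipr_invariant_makespan | apply: ipr_stop_balanced].
- by split; [exists own; apply: ipr_invariant_makespan | apply: ipr_exceed_balanced rebal over].
- exact: IH (ipr_invariant_step inv rebal fit).
Qed.

End IPRLoop.

Section SchedulingStage.
Variables (R : realType) (n m : nat) (p : 'I_n -> R).
Hypothesis p1 : forall j, p j = 1.
Variables (out : 'I_n -> 'I_m) (s : 'I_m -> R).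

Lemma bag_makespan_singletons :
  (forall k, bsize out k <= 1)%N -> (bag_makespan out p s <= opt p s)%E.
Proof.
move=> small; apply: le_bigmin => [|f _]; first exact: leey.
pose g := [ffun k => if [pick j | out j == k] is Some j then f j else k].
have gE j : g (out j) = f j.
  rewrite ffunE; case: pickP => [j' /eqP same|/(_ j)]; last by rewrite eqxx.
  suff -> : j' = j by [].
  by move/card_le1_eqP: (small (out j)); apply; rewrite inE ?same.
apply: le_trans (bag_makespan_le p out g s) _; rewrite /makespan.
by under eq_bigr do under eq_bigl do rewrite /= gE.
Qed.

Hypothesis s_gt0 : forall i, 0 < s i.

Lemma bag_makespan_ratio C : 2 <= C ->
  (forall k k', (bsize out k)%:R <= C * (bsize out k')%:R) ->
  (bag_makespan out p s <= C%:E * opt p s)%E.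
Proof.
move=> C_ge2 ratio.
apply: (big_ind (fun x => bag_makespan out p s <= C%:E * x)%E).
- by rewrite muleC gt0_mulye ?leey // lte_fin; lra.
- by move=> x y; rewrite minEle; case: ifP.
move=> f _; have [T fT] := makespan_fin p1 f s_gt0.
have T_ge0 : 0 <= T by rewrite -lee_fin -fT (makespan_ge0 p1).
have f_fit i : (bsize f i)%:R <= T * s i.
  have := le_bigmax 0%E (fun i => ptime (bsize f i)%:R (s i)) i.
  by rewrite -(makespan_unit p1) fT lee_ptime_pos.
have [g g_fit] : exists g : 'I_m -> 'I_m,
    forall i, \sum_(k | g k == i) (bsize out k)%:R <= C * (T * s i).
  apply: ratio_bounded_assignment => // [i|].
    by rewrite mulr_ge0 // ltW.
  by rewrite -natr_sum sum_bsize -(sum_bsize f) natr_sum; apply: ler_sum => i _.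
apply: le_trans (bag_makespan_le p out g s) _.
rewrite fT -EFinM (makespan_unit p1); apply: bigmax_le => [|i _].
  by rewrite lee_fin mulr_ge0 //; lra.
by rewrite lee_ptime_pos // -mulrA bsize_comp natr_sum.
Qed.

Lemma bag_makespan_balanced C : 2 <= C -> bags_balanced C out ->
  (bag_makespan out p s <= C%:E * opt p s)%E.
Proof.
move=> C_ge2 [/bag_makespan_singletons small|]; last exact: bag_makespan_ratio.
apply: le_trans small _; apply: lee_pemull; first exact: opt_ge0.
by rewrite lee_fin; lra.
Qed.

End SchedulingStage.

Theorem theorem3 (R : realType) (n m : nat) (p : 'I_n -> R) (eps alpha : R) :
  (forall j, p j = 1) -> 0 < eps < 1 -> 0 < alpha < 1 ->
  (* (1+eps)(1+alpha)-consistency *)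
  (forall s : 'I_m -> R, (forall i, 0 < s i) ->
     forall out, IPR p s alpha eps 2 out ->
       (bag_makespan out p s <= ((1 + eps) * (1 + alpha))%:E * opt p s)%E)
  /\
  (* (2 + 1/alpha)-robustness *)
  (forall shat s : 'I_m -> R, (forall i, 0 <= shat i) -> (forall i, 0 < s i) ->
     forall out, IPR p shat alpha eps 2 out ->
       (bag_makespan out p s <= (2 + alpha^-1)%:E * opt p s)%E).
Proof.
move=> p1 /andP[eps_gt0 _] /andP[alpha_gt0 _]; split.
  move=> s s_gt0 out [a0 [[_ a0_opt] loop]].
  have s_ge0 i : 0 <= s i by apply: ltW.
  have [cr cr_def] := makespan_fin p1 a0 s_gt0.
  have cr_ge0 : 0 <= cr by rewrite -lee_fin -cr_def (makespan_ge0 p1).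
  rewrite cr_def in loop a0_opt.
  have [[own2 fit] _] := ipr_loop_output p1 alpha_gt0 cr_ge0 loop
    (ipr_invariant_init p1 s_ge0 alpha_gt0 cr_ge0 cr_def).
  apply: le_trans (bag_makespan_le p out own2 s) (le_trans fit _).
  rewrite [(1 + eps) * _]mulrC !EFinM -muleA lee_wpmul2l // lee_fin; lra.
move=> shat s shat_ge0 s_gt0 out [a0 [_ loop]].
have C_ge2 : 2 <= 2 + alpha^-1 by rewrite lerDl invr_ge0 ltW.
apply: (bag_makespan_balanced p1 s_gt0 C_ge2).
move: loop; case opt_a0 : (makespan a0 p shat) => [cr| |] loop.
- have cr_ge0 : 0 <= cr by rewrite -lee_fin -opt_a0 (makespan_ge0 p1).
  exact: (ipr_loop_output p1 alpha_gt0 cr_ge0 loop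
    (ipr_invariant_init p1 shat_ge0 alpha_gt0 cr_ge0 opt_a0)).2.
- exact: ipr_loop_output_infty loop.
- by have := makespan_ge0 p1 a0 shat; rewrite opt_a0.
Qed.
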